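(* Suppose that $\Gamma(t)$ is finite for every $t\in S$. Let $D\subset S$ and let $A\subset\Omega$ be $D$-determined. Then $F_A\cap\mathcal H_\pi=F^D_A\cap\mathcal H_\pi$.
   Context: Let $\mathcal H$ be a complex Hilbert space. A projection is a bounded self-adjoint idempotent operator; $\wedge_\alpha p_\alpha$ is the projection onto the intersection of the ranges of the $p_\alpha$. Sums of countably many operators are understood strongly. Let $S$ be an arbitrary set; for each $t\in S$ let $\Gamma(t)$ be a countable set and for $a\in\Gamma(t)$ let $p^t_a$ be a projection on $\mathcal H$ with $\sum_{a\in\Gamma(t)}p^t_a=I$. Let $\pi=\{p^t_a\}$ and $p^{t_1,\dots,t_k}_{a_1,\dots,a_k}=\wedge_{i=1}^kp^{t_i}_{a_i}$. $\pi$ commutes on $\phi$ if $W\phi=V\phi$ whenever $W,V$ are finite products of elements of $\pi$ with the same factors (with multiplicity) in possibly different orders; $\mathcal H_\pi$ is the set of such $\phi$. Let $\Omega=\prod_{t\in S}\Gamma(t)$. For $A\subset\Omega$ and $D\subset S$, $F^D_A=\{\phi\in\mathcal H:$ for every $\omega\in A$ there are $t_1,\dots,t_k\in D$ with $p^{t_1,\dots,t_k}_{\omega_{t_1},\dots,\omega_{t_k}}\phi=0\}$, and $F_A=F^S_A$. A set $A\subset\Omega$ is $D$-determined if any two elements of $\Omega$ with identical restrictions to $D$ either both belong to $A$ or both do not. *)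

From HB Require Import structures.
From mathcomp Require Import all_boot all_order all_algebra.
From mathcomp Require Import complex.
From mathcomp Require Import all_classical all_reals topology normedtype.
From Stdlib Require Import Permutation.
Set Implicit Arguments. Unset Strict Implicit. Unset Printing Implicit Defensive.
Import Order.TTheory GRing.Theory Num.Theory.
Import numFieldNormedType.Exports.
Local Open Scope classical_set_scope.
Local Open Scope ring_scope.
Local Open Scope complex_scope.

Definition is_inner_product (R : realType) (H : completeNormedModType R[i])
  (ip : H -> H -> R[i]) : Prop :=
  [/\ (forall (a : R[i]) (x y z : H), ip (a *: x + y) z = a * ip x z + ip y z),
      (forall x y : H, ip y x = Num.conj (ip x y)) &
      (forall x : H, ip x x = `|x| ^+ 2)].

Definition bounded_op (R : realType) (H : completeNormedModType R[i])
  (T : H -> H) : Prop :=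
  (forall (a : R[i]) (x y : H), T (a *: x + y) = a *: T x + T y) /\ continuous T.

Definition is_projection (R : realType) (H : completeNormedModType R[i])
  (ip : H -> H -> R[i]) (p : H -> H) : Prop :=
  [/\ bounded_op p, (forall x y, ip (p x) y = ip x (p y)) &
      (forall x, p (p x) = p x)].

Definition op_range (H : Type) (p : H -> H) : set H := [set y | exists x, y = p x].

(* [q] is the meet of the projections in [ps]: the projection onto the
   intersection of their ranges (the empty meet is the identity). *)
Definition is_meet (R : realType) (H : completeNormedModType R[i])
  (ip : H -> H -> R[i]) (ps : seq (H -> H)) (q : H -> H) : Prop :=
  is_projection ip q /\
  op_range q = [set y | forall p, List.In p ps -> op_range p y].

Definition op_prod (H : Type) (ws : seq (H -> H)) (x : H) : H :=
  foldr (fun f y => f y) x ws.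

(* H_pi : vectors on which the family pi = {p t a} commutes *)
Definition commuting_set (R : realType) (H : completeNormedModType R[i])
  (S : Type) (G : S -> finType) (p : forall t, G t -> H -> H) : set H :=
  [set phi | forall l1 l2 : seq {t : S & G t},
     Permutation (map (fun i => p (projT1 i) (projT2 i)) l1)
                 (map (fun i => p (projT1 i) (projT2 i)) l2) ->
     op_prod (map (fun i => p (projT1 i) (projT2 i)) l1) phi =
     op_prod (map (fun i => p (projT1 i) (projT2 i)) l2) phi].

Definition F_set (R : realType) (H : completeNormedModType R[i])
  (ip : H -> H -> R[i]) (S : Type) (G : S -> finType)
  (p : forall t, G t -> H -> H) (D : set S) (A : set (forall t, G t)) : set H :=
  [set phi | forall omega, A omega ->
     exists ts : seq S, (forall t, List.In t ts -> D t) /\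
       exists q, is_meet ip (map (fun t => p t (omega t)) ts) q /\ q phi = 0].

Definition determined (S : Type) (G : S -> Type) (D : set S)
  (A : set (forall t, G t)) : Prop :=
  forall omega omega' : forall t, G t,
    (forall t, D t -> omega t = omega' t) -> (A omega <-> A omega').

From HB Require Import structures.
From mathcomp Require Import all_boot all_order all_algebra.
From mathcomp Require Import complex.
From mathcomp Require Import all_classical all_reals topology normedtype.
From Stdlib Require Import Permutation Eqdep.
From mathcomp Require Import ring lra.
Import Order.TTheory GRing.Theory Num.Theory.
Local Open Scope classical_set_scope.
Local Open Scope ring_scope.
Local Open Scope complex_scope.

(** The products of the projections [p t a] applied to a vector [phi] of
   [H_pi] do not depend on the order of the factors and absorb repetitions;
   on such a [phi], the meet of finitely many of them (which exists by the
   Hilbert projection theorem) acts as their product.  Now let [omega] be in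
   [A] and suppose that no finite product of projections [p t (omega t)] with
   [t] in [D] kills [phi].  By Zorn's lemma the graph of [omega] on [D]
   extends to a maximal functional set of pairs [(t, a)] no finite product
   along which kills [phi].  Maximality together with [\sum_a p t a = 1]
   makes this set total: it is the graph of some [omega'].  As [omega']
   agrees with [omega] on [D] and [A] is [D]-determined, [omega'] is in [A],
   so [phi] in [F_A] gives a finite product along [omega'] that kills [phi],
   a contradiction. *)

(** * Real-valued norm *)

(* The norm of a normed module over [R[i]] has values in [R[i]], whose order
   is only partial; [rnorm] reads it in [R], where [lra] and [nra] apply. *)
Definition rnorm {R : realType} {V : normedModType R[i]} (x : V) : R := complex.Re `|x|.

Section RealNorm.
Context {R : realType} {V : normedModType R[i]}.
Implicit Types (x y : V).

Lemma rnormE x : `|x| = (rnorm x)%:C.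
Proof. by rewrite /rnorm [LHS]complexE (ger0_Im (normr_ge0 x)) mulr0 addr0. Qed.

Lemma rnorm_ge0 x : 0 <= rnorm x.
Proof. by rewrite -lecR -rnormE normr_ge0. Qed.

Lemma rnormD x y : rnorm (x + y) <= rnorm x + rnorm y.
Proof. by have := ler_normD x y; rewrite !rnormE -rmorphD lecR. Qed.

Lemma rnormB x y : rnorm (x - y) = rnorm (y - x).
Proof. by rewrite /rnorm distrC. Qed.

Lemma rnormZ2 x : rnorm ((2 : R[i]) *: x) = 2 * rnorm x.
Proof. by rewrite /rnorm normrZ normr_nat !mulr_natl raddfMn. Qed.

Lemma closed_rnorm_ball x (r : R) : closed [set y | rnorm (x - y) <= r].
Proof.
move=> y cly /=; rewrite leNgt; apply/negP => ry.
have e0 : 0 < (rnorm (x - y) - r)%:C by rewrite ltcR subr_gt0.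
have [z [/= zr]] := cly _ (nbhsx_ballx y _ e0).
rewrite -ball_normE /ball_ /= rnormE ltcR rnormB => yz.
by have := rnormD (x - z) (z - y); rewrite addrA subrK; lra.
Qed.

End RealNorm.

Lemma cvg_of_sqr_dist_le {R : realType} {V : completeNormedModType R[i]}
  {u : nat -> V} :
  (forall n k, rnorm (u n - u k) ^+ 2 <= 2 * n.+1%:R^-1 + 2 * k.+1%:R^-1) ->
  cvg (u @ \oo).
Proof.
move=> u_dist; apply/cauchy_cvgP/cauchyP => e e0.
have eE : e = (complex.Re e)%:C by rewrite [LHS]complexE (ger0_Im (ltW e0)) mulr0 addr0.
have Re_gt0 : 0 < complex.Re e by rewrite -ltcR -eE.
have e2_gt0 : 0 < complex.Re e ^+ 2 / 4 by rewrite divr_gt0 ?exprn_gt0.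
have [N] := ltr_add_invr e2_gt0.
rewrite add0r => Ne; exists (u N), N => // n /= Nn.
rewrite -ball_normE /ball_ /= rnormE eE ltcR.
have nN : n.+1%:R^-1 <= N.+1%:R^-1 :> R by rewrite lef_pV2 ?posrE ?ler_nat.
have := u_dist N n; have := rnorm_ge0 (u N - u n).
set r := rnorm _; set a := N.+1%:R^-1 in Ne nN *; set b := n.+1%:R^-1 in nN *.
nra.
Qed.

Lemma incl_chain_bigcup {T : Type} {X0 : set T} {F : set (set T)} {l : seq T} :
  total_on F subset ->
  (forall e, List.In e l -> (X0 `|` \bigcup_(X in F) X) e) ->
  exists2 Y, Y = set0 \/ F Y & forall e, List.In e l -> (X0 `|` Y) e.
Proof.
move=> Ftot; elim: l => [_|e l IH sub]; first by exists set0; [left|].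
have [Y Y_F lY] := IH (fun e' h => sub e' (or_intror h)).
case: (sub e (or_introl erefl)) => [X0e|[Z FZ Ze]].
  by exists Y => // e' [<-|/lY]; [left|].
case: Y_F lY => [->|FY] lY.
  by exists Z; [right | move=> e' [<-|/lY[|[]]]; [right|left]].
have [YZ|ZY] := Ftot _ _ FY FZ.
  by exists Z; [right | move=> e' [<-|/lY[|/YZ]]; [right|left|right]].
by exists Y; [right | move=> e' [<-|/lY] //; right; exact: ZY].
Qed.

Lemma map_existT_projT1 {I : Type} {T : I -> Type} (f : forall i, T i)
    (l : seq {i : I & T i}) :
  (forall e, List.In e l -> projT2 e = f (projT1 e)) ->
  map (fun i => existT T i (f i)) (map (@projT1 _ _) l) = l.
Proof.
elim: l => [//|[i x] l IH /= lf].
have /= -> := lf _ (or_introl erefl).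
by rewrite IH // => e el; exact: lf e (or_intror el).
Qed.

Lemma continuous_of_contraction {K : numFieldType} {V : normedModType K} (f : V -> V) :
  (forall x y, f (x - y) = f x - f y) -> (forall v, `|f v| <= `|v|) -> continuous f.
Proof.
move=> fB f_le x; apply/cvgrPdist_lt => e e0; near=> y.
rewrite -fB; apply: le_lt_trans (f_le _) _; near: y.
exact: ((@cvgrPdist_lt _ _ _ (nbhs x) _ id x).1 cvg_id e e0).
Unshelve. all: by end_near.
Qed.

(** * Projections and the Hilbert projection theorem *)

Section Projection.
Context {R : realType} {H : completeNormedModType R[i]} {ip : H -> H -> R[i]}.
Context {f : H -> H}.
Hypothesis fP : is_projection ip f.

Lemma proj_linear a x y : f (a *: x + y) = a *: f x + f y.
Proof. by case: fP => -[]. Qed.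

Lemma proj0 : f 0 = 0.
Proof. by have := proj_linear (-1) 0 0; rewrite scaler0 addr0 scaleN1r addNr. Qed.

Lemma projB x y : f (x - y) = f x - f y.
Proof.
have fN z : f (- z) = - f z.
  by have := proj_linear (-1) z 0; rewrite !addr0 proj0 addr0 !scaleN1r.
by have := proj_linear 1 x (- y); rewrite !scale1r fN.
Qed.

Lemma proj_idem x : f (f x) = f x.
Proof. by case: fP. Qed.

Lemma proj_selfadj x y : ip (f x) y = ip x (f y).
Proof. by case: fP. Qed.

Lemma proj_rangeP y : op_range f y <-> f y = y.
Proof. by split => [[z ->]|fy]; [rewrite proj_idem | exists y]. Qed.

Lemma proj_fixed_closed (u : nat -> H) l :
  (forall n, f (u n) = u n) -> u @ \oo --> l -> f l = l.
Proof.
move=> u_fixed ul.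
have ful : (f \o u) @ \oo --> f l.
  by apply: continuous_cvg ul; case: fP => -[_ + _ _]; apply.
rewrite (_ : f \o u = u) in ful; last by apply: funext => n /=; exact: u_fixed.
exact: (cvg_unique (@norm_hausdorff _ H) ful ul).
Qed.

End Projection.

Section InnerProduct.
Context {R : realType} {H : completeNormedModType R[i]} {ip : H -> H -> R[i]}.
Hypothesis ipP : is_inner_product ip.
Implicit Types x y z u v : H.

Lemma ipDl x y z : ip (x + y) z = ip x z + ip y z.
Proof. by case: ipP => lin _ _; have := lin 1 x y z; rewrite scale1r mul1r. Qed.

Lemma ip0l z : ip 0 z = 0.
Proof. by have := ipDl 0 0 z; rewrite addr0 -{1}[ip 0 z]addr0 => /addrI. Qed.

Lemma ipZl a x z : ip (a *: x) z = a * ip x z.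
Proof. by case: ipP => lin _ _; have := lin a x 0 z; rewrite !addr0 ip0l addr0. Qed.

Lemma ipBl x y z : ip (x - y) z = ip x z - ip y z.
Proof. by rewrite ipDl -scaleN1r ipZl mulN1r. Qed.

Lemma ip_conj x y : ip y x = Num.conj (ip x y).
Proof. by case: ipP. Qed.

Lemma ipDr x y z : ip z (x + y) = ip z x + ip z y.
Proof. by rewrite ip_conj ipDl rmorphD (ip_conj x) (ip_conj y). Qed.

Lemma ipZr a x z : ip z (a *: x) = Num.conj a * ip z x.
Proof. by rewrite ip_conj ipZl rmorphM (ip_conj x). Qed.

Lemma ipBr x y z : ip z (x - y) = ip z x - ip z y.
Proof. by rewrite ip_conj ipBl rmorphB (ip_conj x) (ip_conj y). Qed.

Lemma ipxx_eq0 x : ip x x = 0 -> x = 0.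
Proof. by case: ipP => _ _ ->; move/eqP; rewrite expf_eq0 /= normr_eq0 => /eqP. Qed.

Lemma ipxx_rnorm x : ip x x = (rnorm x ^+ 2)%:C.
Proof. by case: ipP => _ _ ->; rewrite rnormE rmorphXn. Qed.

Lemma rnorm_sqr x : rnorm x ^+ 2 = complex.Re (ip x x).
Proof. by rewrite ipxx_rnorm. Qed.

Lemma parallelogram x y :
  rnorm (x + y) ^+ 2 + rnorm (x - y) ^+ 2 = 2 * rnorm x ^+ 2 + 2 * rnorm y ^+ 2.
Proof.
rewrite !rnorm_sqr !mulr_natl -!raddfMn -!raddfD; congr complex.Re.
by rewrite !ipBl !ipDl !ipBr !ipDr; ring.
Qed.

Lemma apollonius x u v :
  rnorm (u - v) ^+ 2 + 4 * rnorm (x - 2^-1 *: (u + v)) ^+ 2 =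
  2 * rnorm (x - u) ^+ 2 + 2 * rnorm (x - v) ^+ 2.
Proof.
have := parallelogram (x - u) (x - v).
have -> : x - u + (x - v) = (2 : R[i]) *: (x - 2^-1 *: (u + v)).
  by rewrite scalerBr scalerA mulfV ?pnatr_eq0 // scale1r scaler_nat mulr2n opprD addrACA.
have -> : x - u - (x - v) = v - u by rewrite opprB addrC addrA subrK.
by rewrite rnormZ2 exprMn (rnormB v u); lra.
Qed.

Lemma proj_comp_absorb {q f} : is_projection ip q -> is_projection ip f ->
  (forall y, f (q y) = q y) -> forall x, q (f x) = q x.
Proof.
move=> qP fP fq x; apply/eqP; rewrite -subr_eq0 -(projB qP); apply/eqP/ipxx_eq0.
rewrite (proj_selfadj qP) (proj_idem qP) -[in X in ip _ X]fq -(proj_selfadj fP).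
by rewrite (projB fP) (proj_idem fP) subrr ip0l.
Qed.

(* With [w = ip z y] and [t = 1 / (rnorm y ^+ 2 + 1)], moving [z] by [t w y]
   lowers [rnorm z ^+ 2] by [(t + t ^+ 2) |w| ^+ 2]. *)
Lemma orthogonal_of_rnorm_min z y :
  (forall c : R[i], rnorm z <= rnorm (z - c *: y)) -> ip z y = 0.
Proof.
move=> z_min; set w := ip z y.
pose beta := rnorm y ^+ 2; pose alpha := complex.Re w ^+ 2 + complex.Im w ^+ 2.
pose t := (beta + 1)^-1; pose c := t%:C * w.
have alphaE : alpha%:C = w * Num.conj w by rewrite add_Re2_Im2 normCK.
have conj_c : Num.conj c = t%:C * Num.conj w.
  by rewrite rmorphM; congr (_ * _); apply: conj_Creal; rewrite complex_real.
have expandC : ip (z - c *: y) (z - c *: y) =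
    ip z z - ((2 * t)%:C - (t ^+ 2)%:C * beta%:C) * alpha%:C.
  by rewrite alphaE /beta -ipxx_rnorm ipBl !ipBr !ipZl !ipZr (ip_conj z y) -/w conj_c /c; ring.
have expand : rnorm (z - c *: y) ^+ 2 = rnorm z ^+ 2 - (2 * t - t ^+ 2 * beta) * alpha.
  apply: complexI; rewrite -ipxx_rnorm expandC ipxx_rnorm.
  by rewrite rmorphB !rmorphM rmorphB !rmorphM.
have t_beta : t * beta = 1 - t by rewrite /t; field; rewrite lt0r_neq0 // ltr_pwDr ?sqr_ge0.
have t_gt0 : 0 < t by rewrite invr_gt0 ltr_pwDr ?sqr_ge0.
have alpha0 : alpha = 0.
  have := z_min c; have := rnorm_ge0 z; have : 0 <= alpha by rewrite addr_ge0 ?sqr_ge0.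
  rewrite expr2 -mulrA t_beta in expand; nra.
have : w * Num.conj w = 0 by rewrite -alphaE alpha0.
by move/eqP; rewrite mul_conjC_eq0 => /eqP.
Qed.

Section ClosedSubspace.
Variable M : set H.
Hypotheses (M0 : M 0) (Mlin : forall a x y, M x -> M y -> M (a *: x + y)).
Hypothesis Mclosed : forall (u : nat -> H) l, (forall n, M (u n)) -> u @ \oo --> l -> M l.

Lemma nearest_point_orthogonal x m0 : M m0 ->
  (forall m, M m -> rnorm (x - m0) <= rnorm (x - m)) ->
  forall y, M y -> ip (x - m0) y = 0.
Proof.
move=> Mm0 m0_min y My; apply: orthogonal_of_rnorm_min => c.
have -> : x - m0 - c *: y = x - (c *: y + m0) by rewrite opprD addrA addrAC.
by apply: m0_min; apply: Mlin.
Qed.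

Lemma nearest_point_exists x :
  exists2 m0, M m0 & forall m, M m -> rnorm (x - m0) <= rnorm (x - m).
Proof.
pose d := inf [set rnorm (x - m) ^+ 2 | m in M].
have d_inf : has_inf [set rnorm (x - m) ^+ 2 | m in M].
  by split; [exists (rnorm (x - 0) ^+ 2), 0 | exists 0 => _ [m _ <-]; exact: sqr_ge0].
have d_le m : M m -> d <= rnorm (x - m) ^+ 2.
  by move=> Mm; apply: ge_inf; [exact: d_inf.2 | exists m].
have /choice[u u_min] : forall n : nat,
    exists m, M m /\ rnorm (x - m) ^+ 2 < d + n.+1%:R^-1.
  move=> n; have n_gt0 : 0 < n.+1%:R^-1 :> R by rewrite invr_gt0.
  by have [_ [m Mm <-] ?] := inf_adherent n_gt0 d_inf; exists m.
have u_dist n k : rnorm (u n - u k) ^+ 2 <= 2 * n.+1%:R^-1 + 2 * k.+1%:R^-1.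
  have Mmid : M (2^-1 *: (u n + u k)).
    rewrite -[_ *: _]addr0; apply: Mlin => //; rewrite -[u n]scale1r.
    by apply: Mlin; [exact: (u_min n).1 | exact: (u_min k).1].
  have := apollonius x (u n) (u k); have := d_le _ Mmid.
  have := (u_min n).2; have := (u_min k).2.
  by move: (n.+1%:R^-1) (k.+1%:R^-1) => a b; lra.
have u_cvg := cvg_of_sqr_dist_le u_dist.
have Mlim : M (limn u) := Mclosed _ _ (fun n => (u_min n).1) u_cvg.
exists (limn u) => // m Mm.
suff lim_d : rnorm (x - limn u) ^+ 2 <= d.
  have := d_le m Mm; have := rnorm_ge0 (x - m); have := rnorm_ge0 (x - limn u); nra.
apply/ler_addgt0Pr => e e0; have [N] := ltr_add_invr e0; rewrite add0r => Ne.
have : \forall n \near \oo, rnorm (x - u n) <= Num.sqrt (d + e).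
  exists N => // n /= Nn; rewrite -[rnorm _]ger0_norm ?rnorm_ge0 // -sqrtr_sqr.
  rewrite ler_wsqrtr //; apply: (le_trans (ltW (u_min n).2)); rewrite lerD2l.
  by apply: le_trans (ltW Ne); rewrite lef_pV2 ?posrE ?ler_nat.
move/(closed_cvg _ (closed_rnorm_ball x (Num.sqrt (d + e)))) => /(_ _ u_cvg) /= lim_le.
have d_ge0 : 0 <= d by apply: lb_le_inf; [exact: d_inf.1 | move=> _ [? _ <-]; exact: sqr_ge0].
rewrite -(sqr_sqrtr (_ : 0 <= d + e)); last by rewrite addr_ge0 // ltW.
by rewrite lerXn2r // ?nnegrE ?rnorm_ge0 ?sqrtr_ge0.
Qed.

Section Projector.
Context {q : H -> H}.
Hypotheses (q_in : forall x, M (q x)) (q_orth : forall x y, M y -> ip (x - q x) y = 0).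

Lemma projector_unique x m : M m -> (forall y, M y -> ip (x - m) y = 0) -> q x = m.
Proof.
move=> Mm m_orth; apply/eqP; rewrite -subr_eq0; apply/eqP/ipxx_eq0.
have Mqm : M (q x - m) by rewrite addrC -scaleN1r; apply: Mlin.
have e : (x - m) - (x - q x) = q x - m by rewrite opprB addrC addrA subrK.
by rewrite -{1}e ipBl m_orth // q_orth // subrr.
Qed.

Lemma projector_linear a x y : q (a *: x + y) = a *: q x + q y.
Proof.
apply: projector_unique => [|w Mw]; first by apply: Mlin.
have -> : a *: x + y - (a *: q x + q y) = a *: (x - q x) + (y - q y).
  by rewrite scalerBr opprD addrACA.
by rewrite ipDl ipZl !q_orth // mulr0 addr0.
Qed.

Lemma projector_idem x : q (q x) = q x.
Proof. by apply: projector_unique => // w _; rewrite subrr ip0l. Qed.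

Lemma projector_orth_r x y : M y -> ip y (x - q x) = 0.
Proof. by move=> My; rewrite ip_conj q_orth // rmorph0. Qed.

Lemma projector_selfadj x y : ip (q x) y = ip x (q y).
Proof.
rewrite -[in LHS](subrK (q y) y) ipDr projector_orth_r // add0r.
by rewrite -[in RHS](subrK (q x) x) ipDl q_orth // add0r.
Qed.

Lemma projector_pythagoras v : rnorm v ^+ 2 = rnorm (q v) ^+ 2 + rnorm (v - q v) ^+ 2.
Proof.
rewrite !rnorm_sqr -raddfD; congr complex.Re.
rewrite -{1 2}(subrK (q v) v) (ipDl (v - q v)) (ipDr (v - q v)) (ipDr (v - q v) (q v)).
rewrite (q_orth v (q v) (q_in v)) (projector_orth_r v (q v) (q_in v)).
by rewrite addr0 add0r addrC.
Qed.

Lemma projector_continuous : continuous q.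
Proof.
apply: continuous_of_contraction => [x y|v].
  by have := projector_linear (-1) y x; rewrite !scaleN1r addrC => ->; rewrite addrC.
rewrite !rnormE lecR; have := projector_pythagoras v.
by have := rnorm_ge0 v; have := rnorm_ge0 (q v); have := rnorm_ge0 (v - q v); nra.
Qed.

Lemma projector_is_projection : is_projection ip q.
Proof.
split; [split; [exact: projector_linear | exact: projector_continuous] |
        exact: projector_selfadj | exact: projector_idem].
Qed.

Lemma projector_range : op_range q = M.
Proof.
apply/seteqP; split => [_ [x ->]|y My]; first exact: q_in.
by exists y; apply/esym/projector_unique => // w _; rewrite subrr ip0l.
Qed.

End Projector.

Lemma orthogonal_projection_exists : exists q, is_projection ip q /\ op_range q = M.
Proof.
have /choice[q qP] : forall x, exists m, M m /\ forall y, M y -> ip (x - m) y = 0.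
  move=> x; have [m0 Mm0 m0_min] := nearest_point_exists x.
  by exists m0; split => //; apply: nearest_point_orthogonal.
exists q; split; first exact: (projector_is_projection (fun x => (qP x).1) (fun x => (qP x).2)).
exact: (projector_range (fun x => (qP x).1) (fun x => (qP x).2)).
Qed.

End ClosedSubspace.

Lemma meet_exists (ps : seq (H -> H)) :
  (forall f, List.In f ps -> is_projection ip f) -> exists q, is_meet ip ps q.
Proof.
move=> psP; pose M := [set y | forall f, List.In f ps -> f y = y].
have [||| q [qP qM]] := orthogonal_projection_exists M.
- by move=> f /psP /proj0.
- by move=> a x y Mx My f fps; rewrite (proj_linear (psP f fps)) (Mx f fps) (My f fps).
- by move=> u l Mu ul f fps; apply: (proj_fixed_closed (psP f fps)) ul => n; apply: Mu.
exists q; split => //; rewrite qM; apply/seteqP; split => y yM f fps.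
  exact/(proj_rangeP (psP f fps))/yM.
exact/(proj_rangeP (psP f fps))/yM.
Qed.

End InnerProduct.

(** * Products of projections on vectors of [H_pi] *)

Section EventProducts.
Context {R : realType} {H : completeNormedModType R[i]} {ip : H -> H -> R[i]}.
Context {S : Type} {G : S -> finType} (p : forall t, G t -> H -> H).

Definition evop (e : {t : S & G t}) : H -> H := p (projT1 e) (projT2 e).

Definition evprod (l : seq {t : S & G t}) (x : H) : H := op_prod (map evop l) x.

Lemma evprod_cons e l x : evprod (e :: l) x = evop e (evprod l x).
Proof. by []. Qed.

Lemma evprod_app l1 l2 x : evprod (l1 ++ l2)%list x = evprod l1 (evprod l2 x).
Proof. by elim: l1 => [//|e l1 IH]; exact: (congr1 (evop e) IH). Qed.

Hypothesis pP : forall t a, is_projection ip (p t a).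

Lemma evopP e : is_projection ip (evop e).
Proof. exact: pP. Qed.

Lemma evprod0 l : evprod l 0 = 0.
Proof. by elim: l => [//|e l IH]; rewrite evprod_cons IH; exact: proj0 (evopP e). Qed.

Section Commuting.
Variable phi : H.
Hypothesis phi_comm : commuting_set p phi.

Lemma evprod_perm {l1 l2} : Permutation l1 l2 -> evprod l1 phi = evprod l2 phi.
Proof. by move=> l12; apply: phi_comm; apply: Permutation_map. Qed.

Lemma evprod_dup e l : List.In e l -> evprod (e :: l) phi = evprod l phi.
Proof.
move=> /(List.in_split e l)[l1 [l2 ->]].
rewrite (evprod_perm (Permutation_middle l1 (e :: l2) e)) !evprod_app.
by congr (evprod l1 _); rewrite !evprod_cons (proj_idem (evopP e)).
Qed.

Lemma evprod_incl {l l'} : List.incl l l' -> evprod (l ++ l')%list phi = evprod l' phi.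
Proof.
elim: l => [_ //|e l IH sub]; have [e_l' l_l'] := List.incl_cons_inv sub.
change (evprod (e :: (l ++ l')%list) phi = evprod l' phi).
by rewrite evprod_dup ?IH //; apply: List.in_or_app; right.
Qed.

Lemma evprod_eq0_incl {l l'} : List.incl l l' -> evprod l phi = 0 -> evprod l' phi = 0.
Proof.
move=> l_l' l0; rewrite -(evprod_incl l_l') (evprod_perm (Permutation_app_comm l l')).
by rewrite evprod_app l0 evprod0.
Qed.

Hypothesis ipP : is_inner_product ip.
Hypothesis Hsum : forall t (x : H), \sum_(a : G t) p t a x = x.

Lemma meet_evprod {l q} : is_meet ip (map evop l) q -> q phi = evprod l phi.
Proof.
move=> [qP q_range].
have fq e : List.In e l -> forall y, evop e (q y) = q y.
  move=> el y; apply/(proj_rangeP (evopP e)).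
  have : op_range q (q y) by exists y.
  by rewrite q_range; apply; apply: List.in_map.
have q_evprod l' : List.incl l' l -> forall x, q (evprod l' x) = q x.
  elim: l' => [_ //|e l' IH sub x]; have [el l'l] := List.incl_cons_inv sub.
  by rewrite evprod_cons (proj_comp_absorb ipP qP (evopP e) (fq e el)) IH.
have : op_range q (evprod l phi).
  rewrite q_range => _ /List.in_map_iff[e [<- el]].
  by apply/(proj_rangeP (evopP e)); rewrite -evprod_cons evprod_dup.
by move=> /(proj_rangeP qP) fixed; rewrite -fixed q_evprod //; exact: List.incl_refl.
Qed.

(** * Maximal admissible sets of pairs *)

Definition functional_set (X : set {t : S & G t}) :=
  forall t a b, X (existT _ t a) -> X (existT _ t b) -> a = b.

Definition admissible (X : set {t : S & G t}) :=
  functional_set X /\ forall l, (forall e, List.In e l -> X e) -> evprod l phi <> 0.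

Lemma admissible_maximal {X0} : admissible X0 ->
  exists2 A0, admissible (X0 `|` A0) & forall B, A0 `<` B -> ~ admissible (X0 `|` B).
Proof.
move=> X0_adm.
suff [A0 [A0_adm A0_max]] :
    exists A0, admissible (X0 `|` A0) /\ forall B, A0 `<` B -> ~ admissible (X0 `|` B).
  by exists A0.
apply: Zorn_bigcup => F F_adm Ftot.
have chain_adm Y : Y = set0 \/ F Y -> admissible (X0 `|` Y).
  by case=> [->|/F_adm //]; rewrite setU0.
split => [t a b ta tb | l l_sub].
  have ab_sub e : List.In e [:: existT _ t a; existT _ t b] ->
      (X0 `|` \bigcup_(X in F) X) e by case=> [<-|[<-|[]]].
  have [Y /chain_adm[Y_fun _] sub] := incl_chain_bigcup Ftot ab_sub.
  by apply: Y_fun; apply: sub; [left | right; left].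
have [Y /chain_adm[_ Y_spares] sub] := incl_chain_bigcup Ftot l_sub.
exact: Y_spares.
Qed.

Lemma admissible_add_eq0 X t a : admissible X -> (forall b, ~ X (existT _ t b)) ->
  ~ admissible (X `|` [set existT _ t a]) ->
  exists l, (forall e, List.In e l -> X e \/ e = existT _ t a) /\ evprod l phi = 0.
Proof.
move=> X_adm t_new not_adm; apply: contrapT => no_l; apply: not_adm; split.
  move=> t' a' b'; case: (pselect (t' = t)) => [tt|t't].
    subst t'.
    have only_a c : (X `|` [set existT _ t a]) (existT _ t c) -> c = a.
      by case=> [/t_new[]|ca]; exact: inj_pair2 ca.
    by move=> /only_a -> /only_a ->.
  have inX c : (X `|` [set existT _ t a]) (existT _ t' c) -> X (existT _ t' c).
    by case=> // /(congr1 (@projT1 _ _)).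
  by move=> /inX a'X /inX b'X; exact: X_adm.1 a'X b'X.
by move=> l l_sub l0; apply: no_l; exists l.
Qed.

(* Gluing the lists yields one [L] with [p t a (evprod L phi) = 0] for every
   [a]; summing over [a] then kills [evprod L phi]. *)
Lemma evprod_eq0_of_cover X t :
  (forall a : G t, exists l,
     (forall e, List.In e l -> X e \/ e = existT _ t a) /\ evprod l phi = 0) ->
  exists L, (forall e, List.In e L -> X e) /\ evprod L phi = 0.
Proof.
move=> kill.
have split_off e0 l : (forall e, List.In e l -> X e \/ e = e0) ->
    exists2 L, (forall e, List.In e L -> X e) & List.incl l (e0 :: L).
  elim: l => [_|e l IH sub]; first by exists [::].
  have [L LX lL] := IH (fun e' h => sub e' (or_intror h)).
  case: (sub e (or_introl erefl)) => [Xe|->].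
    exists (e :: L); first by move=> e' [<-|/LX].
    by move=> e' [<-|/lL[<-|e'L]]; [right; left | left | right; right].
  by exists L => // e' [<-|/lL]; [left|].
have [L LX L0] : exists2 L, (forall e, List.In e L -> X e) &
    forall a : G t, evprod (existT _ t a :: L) phi = 0.
  suff /(_ (enum (G t)))[L LX L0] : forall s : seq (G t), exists2 L, (forall e, List.In e L -> X e) &
      forall a, a \in s -> evprod (existT _ t a :: L) phi = 0.
    by exists L => // a; apply: L0; rewrite mem_enum.
  elim=> [|a s [L LX L0]]; first by exists [::].
  have [la [la_sub la0]] := kill a; have [La LaX la_La] := split_off _ _ la_sub.
  exists (La ++ L)%list => [e /(List.in_app_or _ _ _)[/LaX|/LX] //|b].
  rewrite in_cons => /predU1P[->|bs].
    apply: evprod_eq0_incl la0 => e /la_La[<-|eLa]; first by left.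
    by right; apply: List.in_or_app; left.
  apply: evprod_eq0_incl (L0 b bs) => e [<-|eL]; first by left.
  by right; apply: List.in_or_app; right.
by exists L; split => //; rewrite -(Hsum t (evprod L phi)); apply: big1 => a _; exact: L0.
Qed.

Lemma maximal_admissible_total {X0 A0} : admissible (X0 `|` A0) ->
  (forall B, A0 `<` B -> ~ admissible (X0 `|` B)) ->
  forall t, exists a, (X0 `|` A0) (existT _ t a).
Proof.
move=> adm max t; apply: contrapT => no_a.
have t_new b : ~ (X0 `|` A0) (existT _ t b) by move=> tb; apply: no_a; exists b.
have A0_lt a : A0 `<` A0 `|` [set existT _ t a].
  split => [e|/(_ _ (or_intror erefl)) A0a]; first by left.
  by apply: (t_new a); right.
have kill a : exists l, (forall e, List.In e l -> (X0 `|` A0) e \/ e = existT _ t a) /\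
    evprod l phi = 0.
  by apply: (admissible_add_eq0 _ _ a adm t_new); rewrite -setUA; exact: max (A0_lt a).
have [L [LX L0]] := evprod_eq0_of_cover _ _ kill.
exact: adm.2 L LX L0.
Qed.

Lemma evprod_graph_eq0 {D A omega} : determined D A -> F_set ip p setT A phi ->
  A omega -> exists ts : seq S, (forall t, List.In t ts -> D t) /\
    evprod (map (fun t => existT _ t (omega t)) ts) phi = 0.
Proof.
move=> HA phi_F A_omega; apply: contrapT => no_ts.
pose X0 := [set e : {t : S & G t} | D (projT1 e) /\ projT2 e = omega (projT1 e)].
have X0_adm : admissible X0.
  split=> [t a b [_ /= ->] [_ /= ->] // | l lX0 l0].
  apply: no_ts; exists (map (@projT1 _ _) l); split.
    by move=> t /List.in_map_iff[e [<- /lX0[]]].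
  by rewrite map_existT_projT1 // => e /lX0[].
have [A0 A0_adm A0_max] := admissible_maximal X0_adm.
have total := maximal_admissible_total A0_adm A0_max.
pose omega' t := proj1_sig (cid (total t)).
have omega'P t : (X0 `|` A0) (existT _ t (omega' t)) := proj2_sig (cid (total t)).
have agree t : D t -> omega t = omega' t.
  by move=> Dt; apply: A0_adm.1 (omega'P t); left.
have [ts [_ [q [q_meet q0]]]] := phi_F omega' ((HA omega omega' agree).1 A_omega).
apply: (A0_adm.2 (map (fun t => existT _ t (omega' t)) ts)).
  by move=> _ /List.in_map_iff[t [<- _]]; exact: omega'P.
have q_meet' : is_meet ip (map evop (map (fun t => existT _ t (omega' t)) ts)) q.
  by rewrite -map_comp.
by rewrite -(meet_evprod q_meet').
Qed.

Lemma F_set_restrict D A : determined D A ->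
  F_set ip p setT A phi -> F_set ip p D A phi.
Proof.
move=> HA phi_F omega A_omega.
have [ts [tsD ts0]] := evprod_graph_eq0 HA phi_F A_omega.
have [q q_meet] : exists q, is_meet ip (map evop (map (fun t => existT _ t (omega t)) ts)) q.
  by apply: (meet_exists ipP) => _ /List.in_map_iff[e [<- _]]; exact: evopP.
exists ts; split=> //; exists q; split; first by rewrite -map_comp in q_meet.
by rewrite (meet_evprod q_meet).
Qed.

End Commuting.
End EventProducts.

Theorem theorem4 (R : realType) (H : completeNormedModType R[i])
  (ip : H -> H -> R[i]) (S : Type) (G : S -> finType)
  (p : forall t, G t -> H -> H)
  (Hip : is_inner_product ip)
  (Hproj : forall t a, is_projection ip (p t a))
  (Hsum : forall t (x : H), \sum_(a : G t) p t a x = x)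
  (D : set S) (A : set (forall t, G t))
  (HA : determined D A) :
  F_set ip p setT A `&` commuting_set p = F_set ip p D A `&` commuting_set p.
Proof.
apply/seteqP; split=> phi [phi_F phi_comm]; split=> //.
  exact: F_set_restrict p Hproj phi phi_comm Hip Hsum D A HA phi_F.
by move=> omega /phi_F[ts [_ q_meet]]; exists ts.
Qed.
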